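(* Let $\lambda$ be a partition of $n$ with $s>t\ge1$, where $t=\lambda_2-1$ and $s=\lambda_1-1$. Let $\mathcal{G}$ be the generating set of $\mathcal{I}_\lambda$ consisting of: $e_1(n),\dots,e_{\ell(\lambda)-1}(n)$; the sets $e_{b_k}(n-k)$ for $1\le k\le t$, where $b_k=\lambda'_1+\cdots+\lambda'_k-k+1$; and all square-free monomials of degree $n-s$. Writing $S=\{x_1,\dots,x_n\}$, the set obtained from $\mathcal{G}$ by removing the $\binom{n-s+t}{t}$ square-free monomials $$e_{n-s}\big(S\setminus\{x_1,x_2,\dots,x_{s-t},x_{i_1},\dots,x_{i_t}\}\big),\qquad s-t<i_1<i_2<\cdots<i_t\le n,$$ still generates $\mathcal{I}_\lambda$.
   Context: $k$ is a field of characteristic $0$ and $R=k[x_1,\dots,x_n]$. For a set $S$ of variables, $e_r(S)$ is the $r$-th elementary symmetric polynomial in the variables of $S$ ($e_0=1$, $e_r(S)=0$ if $r>|S|$); note $e_r(S)$ with $|S|=r$ is the square-free monomial $\prod_{x\in S}x$. For $1\le m\le n$, $e_r(m)=\{e_r(S): S\subseteq\{x_1,\dots,x_n\},\ |S|=m\}$. A partition $\lambda$ of $n$ has parts $\lambda_1\ge\lambda_2\ge\cdots$ (zero beyond its length $\ell(\lambda)$) and conjugate $\lambda'_i=\#\{j:\lambda_j\ge i\}$. For $1\le m\le n$ let $\delta_m(\lambda)=\lambda'_n+\cdots+\lambda'_{n-m+1}$ ($\lambda'_i=0$ for $i>\lambda_1$). The De Concini–Procesi ideal $\mathcal{I}_\lambda\subseteq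 R$ is the ideal generated by all elements of the sets $e_r(m)$ with $1\le m\le n$ and $m\ge r>m-\delta_m(\lambda)$. *)

From HB Require Import structures.
From mathcomp Require Import all_boot all_order all_algebra.
From mathcomp Require Import mpoly.
Set Implicit Arguments. Unset Strict Implicit. Unset Printing Implicit Defensive.
Import GRing.Theory.
Local Open Scope ring_scope.

(* Variables x_1..x_n are 'X_i for i : 'I_n (0-based: x_{j} = 'X_(j-1)). *)

Definition esym (k : fieldType) (n : nat) (r : nat) (S : {set 'I_n}) : {mpoly k[n]} :=
  \sum_(T : {set 'I_n} | (T \subset S) && (#|T| == r)) \prod_(i in T) 'X_i.

Definition is_partition (lam : seq nat) (n : nat) : bool :=
  [&& sorted geq lam, all (fun x => 0 < x)%N lam & sumn lam == n].

(* lambda_i, 1-indexed, zero beyond the length *)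
Definition part (lam : seq nat) (i : nat) : nat := nth 0%N lam i.-1.

Definition conj_part (lam : seq nat) (i : nat) : nat := count (fun x => i <= x)%N lam.

Definition delta (lam : seq nat) (n m : nat) : nat :=
  (\sum_(n - m + 1 <= i < n + 1) conj_part lam i)%N.

(* Generators of the De Concini--Procesi ideal: e_r(S), |S| = m, 1 <= m <= n,
   m >= r > m - delta_m(lambda)  (written r + delta_m > m to avoid truncation). *)
Definition DP_gen (k : fieldType) (n : nat) (lam : seq nat) (p : {mpoly k[n]}) : Prop :=
  exists (m r : nat) (S : {set 'I_n}),
    [/\ (1 <= m <= n)%N, (r <= m)%N, (m < r + delta lam n m)%N, #|S| = m
      & p = esym k r S].

Definition ideal_gen (k : fieldType) (n : nat) (G : {mpoly k[n]} -> Prop)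
  (p : {mpoly k[n]}) : Prop :=
  exists s : seq ({mpoly k[n]} * {mpoly k[n]}),
    (forall q, q \in s -> G q.2) /\ p = \sum_(q <- s) q.1 * q.2.

Definition DP_ideal (k : fieldType) (n : nat) (lam : seq nat) : {mpoly k[n]} -> Prop :=
  ideal_gen (DP_gen (k := k) (n := n) lam).

Definition bk (lam : seq nat) (j : nat) : nat :=
  ((\sum_(1 <= i < j.+1) conj_part lam i) + 1 - j)%N.

Definition Gset (k : fieldType) (n : nat) (lam : seq nat) (p : {mpoly k[n]}) : Prop :=
  let t := (part lam 2).-1 in
  let s := (part lam 1).-1 in
  (exists j, (1 <= j <= (size lam).-1)%N /\ p = esym k j [set: 'I_n])
  \/ (exists j (S : {set 'I_n}), [/\ (1 <= j <= t)%N, #|S| = (n - j)%N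
                                    & p = esym k (bk lam j) S])
  \/ (exists S : {set 'I_n}, #|S| = (n - s)%N /\ p = esym k (n - s) S).

(* The removed monomials e_{n-s}(S \ {x_1..x_{s-t}, x_{i_1},..,x_{i_t}}),
   s-t < i_1 < ... < i_t <= n  (0-based: U is a t-subset of {i | s-t <= i}). *)
Definition removed (k : fieldType) (n : nat) (lam : seq nat) (p : {mpoly k[n]}) : Prop :=
  let t := (part lam 2).-1 in
  let s := (part lam 1).-1 in
  exists U : {set 'I_n},
    [/\ #|U| = t, (forall i, i \in U -> (s - t <= i)%N)
      & p = esym k (n - s) (~: ([set i : 'I_n | (i < s - t)%N] :|: U))].
Arguments esym : clear implicits.
Arguments DP_gen : clear implicits.
Arguments ideal_gen : clear implicits.
Arguments DP_ideal : clear implicits.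
Arguments Gset : clear implicits.
Arguments removed : clear implicits.

From Pilot Require Import Defs.
From HB Require Import structures.
From mathcomp Require Import all_boot all_order all_algebra.
From mathcomp Require Import mpoly zify.
Set Implicit Arguments. Unset Strict Implicit. Unset Printing Implicit Defensive.

(* The generators of I_lambda are the e_r(S) with r > c_j - j, where j = n - |S| and
   c_j = lambda'_1 + ... + lambda'_j, so b_j is the least admissible degree on the level
   |S| = n - j.  In characteristic 0 the smaller generating set still produces all of them:
   - a degree-(n-s) square-free monomial x_T meeting V = {x_1, ..., x_{s-t}} is not removed;
     if T avoids V, then x_T is e_{n-s}(T + V) minus monomials meeting V, and e_{n-s}(T + V)
     lies on the level n - t above b_t;
   - on a level m < n, e_{r+1} of all m-sets yields e_{r+2} of all m-sets, and on the full set
     (n - r) e_r([n]) = sum_x e_r([n] - x) descends to the level n - 1;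
   - the monomials give every e_r with r >= n - s, and for levels j > t the DP condition
     already forces r >= n - s. *)

Definition conj_psum (lam : seq nat) (j : nat) : nat :=
  \sum_(1 <= i < j.+1) conj_part lam i.

Lemma conj_psumE lam j : conj_psum lam j = sumn [seq minn x j | x <- lam].
Proof.
have sum_leq x : \sum_(1 <= i < j.+1) (i <= x) = minn x j.
  elim: j => [|j IH]; first by rewrite big_geq // minn0.
  by rewrite big_nat_recr //= IH; case: (leqP j.+1 x) => /=; lia.
rewrite /conj_psum /conj_part; elim: lam => [|x lam IH] /=; first by rewrite big1.
by rewrite -IH -sum_leq -big_split.
Qed.

Lemma sumn_map_minn_leq (s : seq nat) j : (sumn [seq minn x j | x <- s] <= sumn s)%N.
Proof. by elim: s => //= x s IH; rewrite leq_add ?geq_minl. Qed.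

Lemma sumn_map_minn_id (s : seq nat) j :
  all (fun x => x <= j)%N s -> sumn [seq minn x j | x <- s] = sumn s.
Proof. by elim: s => //= x s IH /andP [/minn_idPl -> /IH ->]. Qed.

Lemma leq_sumn_mem (s : seq nat) x : x \in s -> (x <= sumn s)%N.
Proof. by elim: s => //= y s IH; rewrite inE => /predU1P [->|/IH]; lia. Qed.

Section Partition.
Variables (lam : seq nat) (n : nat).
Hypothesis lam_part : is_partition lam n.

Lemma sumn_part : sumn lam = n.
Proof. by case/and3P: lam_part => _ _ /eqP. Qed.

Lemma part1_leq : (part lam 1 <= n)%N.
Proof. by rewrite -sumn_part /part; case: lam => //= a rest; rewrite leq_addr. Qed.

Lemma conj_psum_size : conj_psum lam 1 = size lam.
Proof.
rewrite conj_psumE; case/and3P: lam_part => _ + _.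
by elim: lam => //= x s IH /andP [x0 /IH ->]; case: x x0.
Qed.

Lemma conj_psum_delta m : (m <= n)%N -> (conj_psum lam (n - m) + delta lam n m = n)%N.
Proof.
move=> le_mn; rewrite /delta /conj_psum !addn1 -big_cat_nat ?ltnS ?leq_subr //.
rewrite -/(conj_psum lam n) conj_psumE sumn_map_minn_id ?sumn_part //.
by apply/allP => x; rewrite -sumn_part; apply: leq_sumn_mem.
Qed.

Lemma conj_psum_ltE m r : (m <= n)%N ->
  (m < r + delta lam n m)%N = (conj_psum lam (n - m) < r + (n - m))%N.
Proof. by move=> le_mn; have := conj_psum_delta le_mn; lia. Qed.

Lemma conj_psum_bounds j :
  (minn (part lam 1) j <= conj_psum lam j <= minn (part lam 1) j + (n - part lam 1))%N.
Proof.
rewrite conj_psumE -sumn_part /part; case: lam => [|a rest] /=; first by rewrite min0n.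
by have := sumn_map_minn_leq rest j; lia.
Qed.

Lemma conj_psum_tail j : (part lam 2 <= j)%N ->
  conj_psum lam j = (minn (part lam 1) j + (n - part lam 1))%N.
Proof.
rewrite conj_psumE -sumn_part /part => bj; apply/eqP.
case/and3P: lam_part => + _ _; case: lam bj => [|a rest] bj srt /=; first by rewrite min0n.
rewrite sumn_map_minn_id; first lia.
case: rest srt bj => //= b rest /andP [_ srt] bj; rewrite bj.
have geq_trans : transitive geq by move=> ? ? ? h h'; apply: leq_trans h' h.
by apply/allP => x xr; apply: leq_trans bj; exact: (allP (order_path_min geq_trans srt)).
Qed.

End Partition.

Import GRing.Theory.
Local Open Scope ring_scope.

Section IdealGen.
Variables (k : fieldType) (n : nat) (G : {mpoly k[n]} -> Prop).
Local Notation J := (ideal_gen k n G).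

Lemma ideal_gen0 : J 0.
Proof. by exists [::]; rewrite big_nil. Qed.

Lemma ideal_gen_mem q : G q -> J q.
Proof.
by move=> Gq; exists [:: (1, q)]; rewrite big_seq1 mul1r; split=> // r /[!inE] /eqP ->.
Qed.

Lemma ideal_genD p q : J p -> J q -> J (p + q).
Proof.
move=> [s1 [G1 ->]] [s2 [G2 ->]]; exists (s1 ++ s2); rewrite big_cat.
by split=> // r; rewrite mem_cat => /orP [/G1|/G2].
Qed.

Lemma ideal_genMl a p : J p -> J (a * p).
Proof.
move=> [s [Gs ->]]; exists [seq (a * x.1, x.2) | x <- s]; split.
  by move=> r /mapP [x xs ->] /=; exact: Gs.
by rewrite big_map mulr_sumr; apply: eq_bigr => x _; rewrite mulrA.
Qed.

Lemma ideal_genDKr p q : J q -> J (p + q) -> J p.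
Proof.
by move=> Jq Jpq; rewrite -(addrK q p) -mulN1r; apply: ideal_genD (ideal_genMl _ Jq).
Qed.

Lemma ideal_gen_sum (I : Type) (r : seq I) (P : pred I) (F : I -> {mpoly k[n]}) :
  (forall i, P i -> J (F i)) -> J (\sum_(i <- r | P i) F i).
Proof.
move=> JF; elim: r => [|i r IH]; first by rewrite big_nil; apply: ideal_gen0.
by rewrite big_cons; case: ifP => // Pi; apply: ideal_genD (JF _ Pi) IH.
Qed.

Lemma ideal_gen_natrMK (c : nat) p : [pchar k] =i pred0 -> (0 < c)%N ->
  J (c%:R * p) -> J p.
Proof.
move=> k0 c_gt0 Jcp.
have cn0 : (c%:R : k) != 0 by move/pcharf0P: k0 => ->; rewrite -lt0n.
suff -> : p = (c%:R^-1)%:MP * (c%:R * p) by apply: ideal_genMl.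
by rewrite mulrA -mpolyC_nat -mpolyCM mulVf // mul1r.
Qed.

End IdealGen.

Lemma ideal_gen_sub (k : fieldType) (n : nat) (G G' : {mpoly k[n]} -> Prop) p :
  (forall q, G q -> ideal_gen k n G' q) -> ideal_gen k n G p -> ideal_gen k n G' p.
Proof.
move=> GG' [s [Gs ->]]; rewrite big_seq; apply: ideal_gen_sum => q qs.
exact/ideal_genMl/GG'/Gs.
Qed.

Section SubsetsOfCard.
Variable T : finType.
Implicit Types (A S : {set T}) (r : nat).

Lemma exists_notin S : (#|S| < #|T|)%N -> exists z, z \notin S.
Proof.
move=> ltST; have /card_gt0P [z] : (0 < #|~: S|)%N by rewrite -(cardsC S) in ltST; lia.
by rewrite inE; exists z.
Qed.

Lemma exists_subset_card S r : (r <= #|S|)%N ->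
  exists2 A : {set T}, A \subset S & #|A| = r.
Proof.
move=> le_rS; exists [set x in take r (enum S)].
  by apply/subsetP => x; rewrite inE => /mem_take; rewrite mem_enum.
by rewrite cardsE (card_uniqP (take_uniq r (enum_uniq (mem S)))) size_takel -?cardE.
Qed.

Lemma exists_subset_card_in S r y : y \in S -> (0 < r <= #|S|)%N ->
  exists A : {set T}, [/\ A \subset S, y \in A & #|A| = r].
Proof.
case: r => // r yS /= le_rS.
have [A0 sA0 cA0] : exists2 A0 : {set T}, A0 \subset S :\ y & #|A0| = r.
  by apply: exists_subset_card; rewrite (cardsD1 y S) yS in le_rS.
move: sA0; rewrite subsetD1 => /andP [sA0 yA0].
exists (y |: A0); split; rewrite ?setU11 ?cardsU1 ?yA0 ?cA0 //.
by rewrite subUset sub1set yS.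
Qed.

Lemma subset_of_ksubsets S S' r : (0 < r <= #|S|)%N ->
  (forall A, A \subset S -> #|A| = r -> A \subset S') -> S \subset S'.
Proof.
move=> hr sub; apply/subsetP => y yS.
have [A [sAS yA cA]] := exists_subset_card_in yS hr.
exact: subsetP (sub A sAS cA) y yA.
Qed.

Lemma ksubsets_inj S S' r r' : (0 < r <= #|S|)%N ->
  (forall A, (A \subset S) && (#|A| == r) = (A \subset S') && (#|A| == r')) ->
  S = S' /\ r = r'.
Proof.
move=> hr same; have /andP [r_gt0 le_rS] := hr.
have [A sAS cA] := exists_subset_card le_rS.
have er : r' = r by move: (same A); rewrite sAS cA eqxx => /esym /andP [_ /eqP].
subst r'.
have sSS' : S \subset S'.
  apply: subset_of_ksubsets hr _ => B sBS cB.
  by move: (same B); rewrite sBS cB eqxx !andbT => <-.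
have hr' : (0 < r <= #|S'|)%N by rewrite r_gt0 (leq_trans le_rS) ?subset_leq_card.
split=> //; apply/eqP; rewrite eqEsubset sSS'.
apply: subset_of_ksubsets hr' _ => B sBS' cB.
by move: (same B); rewrite sBS' cB eqxx !andbT => ->.
Qed.

End SubsetsOfCard.

Lemma card_set_ltn n m : (m <= n)%N -> #|[set i : 'I_n | (i < m)%N]| = m.
Proof.
move=> le_mn; have -> : [set i : 'I_n | (i < m)%N] = [set widen_ord le_mn i | i : 'I_m].
  apply/setP => i; rewrite inE.
  apply/idP/imsetP => [lt_im|[j _ ->]]; last exact: (ltn_ord j).
  by exists (Ordinal lt_im); last apply/val_inj.
by rewrite card_imset ?card_ord // => i j /(congr1 val) /= /val_inj.
Qed.

Section Esym.
Variables (k : fieldType) (n : nat).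
Implicit Types (S T A : {set 'I_n}) (r : nat).
Local Notation e := (Defs.esym k n).

Lemma esym_eq0 r S : (#|S| < r)%N -> e r S = 0.
Proof.
move=> ltSr; rewrite /Defs.esym big_pred0 // => T.
by apply/negbTE/andP => -[/subset_leq_card + /eqP cT]; rewrite cT leqNgt ltSr.
Qed.

Lemma esym_cardE S : e #|S| S = \prod_(i in S) 'X_i.
Proof.
rewrite /Defs.esym (big_pred1 S) // => T /=; rewrite eqEcard.
by case: (boolP (T \subset S)) => //= sTS; rewrite eqn_leq subset_leq_card.
Qed.

Lemma esym_setU1 r S x : x \notin S -> e r.+1 (x |: S) = e r.+1 S + 'X_x * e r S.
Proof.
move=> xS; have subU1 T : x \notin T -> (T \subset x |: S) = (T \subset S).
  by move=> xT; rewrite -{2}(setU1K xS) subsetD1 xT andbT.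
have notin_sub T : T \subset S -> x \notin T.
  by move=> sTS; apply: contra xS; apply: (subsetP sTS).
rewrite /Defs.esym (bigID (fun T => x \in T)) /= addrC; congr (_ + _).
  apply: eq_bigl => T; case: (boolP (x \in T)) => xT; rewrite ?andbF ?andbT ?subU1 //.
  by apply/esym/negbTE; apply: contraL xT => /andP [/notin_sub].
rewrite mulr_sumr (reindex_onto (fun T => x |: T) (fun T => T :\ x)) /=; last first.
  by move=> T /andP [_ xT]; rewrite setD1K.
apply: eq_big => [T|T /andP [_ /eqP eT]]; last by rewrite big_setU1 // -eT setD11.
case: (boolP (x \in T)) => xT.
  apply/idP/idP => [/andP [_ /eqP eT]|/andP [/notin_sub]]; last by rewrite xT.
  by move: xT; rewrite -eT setD11.
by rewrite setU1K // eqxx setU11 cardsU1 xT eqSS subUset sub1set setU11 subU1 // !andbT.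
Qed.

Lemma esym_sum_setD1 r S : (#|S| - r)%:R * e r S = \sum_(x in S) e r (S :\ x).
Proof.
rewrite /Defs.esym mulr_sumr; under [RHS]eq_bigr do under eq_bigl do rewrite subsetD1.
rewrite (exchange_big_dep (fun T => (T \subset S) && (#|T| == r))) /=; last first.
  by move=> x T _ /andP [/andP [->]].
apply: eq_bigr => T /andP [sTS /eqP cT].
rewrite sumr_const mulr_natl -cT -cardsDS //; congr (_ *+ _); apply: eq_card => x.
by rewrite !inE /in_mem /= sTS eqxx andbT andbC.
Qed.

Lemma esym_sum_mulX r S : r.+1%:R * e r.+1 S = \sum_(x in S) 'X_x * e r (S :\ x).
Proof.
have splitX x : x \in S -> 'X_x * e r (S :\ x) = e r.+1 S - e r.+1 (S :\ x).
  by move=> xS; rewrite -{2}(setD1K xS) esym_setU1 ?setD11 // addrC addKr.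
rewrite (eq_bigr _ splitX) sumrB -esym_sum_setD1 sumr_const -[e r.+1 S *+ _]mulr_natl.
rewrite -mulrBl -natrB ?leq_subr //.
case: (leqP r.+1 #|S|) => [le_rS|lt_Sr]; first by rewrite subKn.
by rewrite esym_eq0 // !mulr0.
Qed.

Lemma prodX_mesym1 T : \prod_(i in T) 'X_i = 'X_[mesym1 T] :> {mpoly k[n]}.
Proof.
rewrite mprodXE; congr 'X_[_]; apply/mnmP => i; rewrite mnm_sumE mnmE.
under eq_bigr do rewrite mnm1E.
case: (boolP (i \in T)) => iT; last first.
  by rewrite big1 // => j jT; apply/eqP; rewrite eqb0; apply: contraNneq iT => <-.
by rewrite (bigD1 i) //= eqxx big1 // => j /andP [_ /negbTE ->].
Qed.

Lemma mcoeff_esym r S A : (e r S)@_(mesym1 A) = ((A \subset S) && (#|A| == r))%:R.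
Proof.
rewrite /Defs.esym raddf_sum /=; under eq_bigr do rewrite prodX_mesym1 mcoeffX.
case: (boolP ((A \subset S) && (#|A| == r))) => PA.
  rewrite (bigD1 A) //= eqxx big1 ?addr0 // => T /andP [_ TA].
  by rewrite (inj_eq (@inj_mesym1 n)) (negbTE TA).
rewrite big1 // => T PT; rewrite (inj_eq (@inj_mesym1 n)).
by case: (T =P A) PA => // <-; rewrite PT.
Qed.

Lemma esym_inj r r' S (S' : {set 'I_n}) : (0 < r <= #|S|)%N ->
  e r S = e r' S' -> S = S' /\ r = r'.
Proof.
move=> hr eSS'; apply: ksubsets_inj hr _ => A.
have := congr1 (mcoeff (mesym1 A)) eSS'; rewrite !mcoeff_esym.
by do 2 case: (_ && _) => //; move/eqP; rewrite ?oner_eq0 // eq_sym oner_eq0.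
Qed.

End Esym.


Section EsymIdeal.
Variables (k : fieldType) (n : nat) (G : {mpoly k[n]} -> Prop).
Hypothesis k0 : [pchar k] =i pred0.
Local Notation J := (ideal_gen k n G).
Local Notation e := (Defs.esym k n).
Implicit Types (S : {set 'I_n}) (r m : nat).

Lemma ideal_gen_esymS r :
  (forall S, J (e r S)) -> forall S, J (e r.+1 S).
Proof.
move=> Jr S; apply: (ideal_gen_natrMK k0 (c := r.+1)) => //.
by rewrite esym_sum_mulX; apply: ideal_gen_sum => x _; apply: ideal_genMl.
Qed.

Lemma ideal_gen_esym_cardS r m : (r <= m)%N ->
  (forall S, #|S| = m -> J (e r S)) -> forall S, #|S| = m.+1 -> J (e r S).
Proof.
move=> le_rm Jr S cS; apply: (ideal_gen_natrMK k0 (c := #|S| - r)); first lia.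
rewrite esym_sum_setD1; apply: ideal_gen_sum => x xS; apply: Jr.
by rewrite (cardsD1 x S) xS in cS; case: cS.
Qed.

(* Exchanging each x in S for a variable z outside S stays on the level m. *)
Lemma ideal_gen_esym_levelS r m : (m < n)%N ->
  (forall S, #|S| = m -> J (e r.+1 S)) -> forall S, #|S| = m -> J (e r.+2 S).
Proof.
move=> lt_mn Jr S cS.
have [z zS] : exists z, z \notin S by apply: exists_notin; rewrite cS card_ord.
have zSx x : z \notin S :\ x by rewrite in_setD1 negb_and zS orbT.
apply: (ideal_gen_natrMK k0 (c := r.+2)) => //.
apply: (@ideal_genDKr _ _ _ _ ('X_z * (r.+1%:R * e r.+1 S))).
  exact/ideal_genMl/ideal_genMl/Jr.
have -> : r.+2%:R * e r.+2 S + 'X_z * (r.+1%:R * e r.+1 S) =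
          \sum_(x in S) 'X_x * e r.+1 (z |: (S :\ x)).
  rewrite !esym_sum_mulX mulr_sumr -big_split /=; apply: eq_bigr => x xS.
  by rewrite esym_setU1 // mulrDr mulrCA.
apply: ideal_gen_sum => x xS; apply/ideal_genMl/Jr.
by rewrite cardsU1 zSx (cardsD1 x S) xS in cS *; rewrite -cS.
Qed.

End EsymIdeal.

Section Theorem7.
Variables (k : fieldType) (n : nat) (lam : seq nat).
Hypothesis k0 : [pchar k] =i pred0.
Hypothesis lam_part : is_partition lam n.
Hypothesis t_gt0 : (1 <= (part lam 2).-1)%N.
Hypothesis t_lt_s : ((part lam 2).-1 < (part lam 1).-1)%N.

Local Notation s := (part lam 1).-1.
Local Notation t := (part lam 2).-1.
Local Notation e := (Defs.esym k n).
Local Notation J := (ideal_gen k n (fun q => Gset k n lam q /\ ~ removed k n lam q)).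
Local Notation V := [set i : 'I_n | (i < s - t)%N].
Implicit Types (S T C : {set 'I_n}) (q : {mpoly k[n]}).

Let part1_leq_n : (part lam 1 <= n)%N. Proof. exact: part1_leq lam_part. Qed.

Let size_leq_n : (size lam <= n)%N.
Proof. by have := conj_psum_bounds lam_part 1; rewrite (conj_psum_size lam_part); lia. Qed.

Lemma bk_bounds j : (j <= t)%N -> (0 < bk lam j <= n - s)%N.
Proof.
by move=> le_jt; have := conj_psum_bounds lam_part j; rewrite /bk -/(conj_psum lam j); lia.
Qed.

Lemma removedP q : removed k n lam q ->
  exists C, [/\ q = e (n - s) C, [disjoint C & V] & #|C| = (n - s)%N].
Proof.
case=> U [cU UV ->]; exists (~: (V :|: U)); split=> //.
  by rewrite disjoints_subset setCS subsetUl.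
have disVU : [disjoint V & U].
  by rewrite disjoints_subset; apply/subsetP => i; rewrite !inE => iV; apply/negP => /UV; lia.
rewrite cardsCs setCK card_ord cardsU (disjoint_setI0 disVU) cards0 cU card_set_ltn; lia.
Qed.

Lemma esym_setT_in_J j : (1 <= j <= (size lam).-1)%N -> J (e j [set: 'I_n]).
Proof.
move=> hj; apply: ideal_gen_mem; split; first by left; exists j.
case/removedP => C [eC _ cC].
have hj' : (0 < j <= #|[set: 'I_n]|)%N by rewrite cardsT card_ord; lia.
by have [eC_T _] := esym_inj hj' eC; move: cC; rewrite -eC_T cardsT card_ord; lia.
Qed.

Lemma esym_bk_in_J j S : (1 <= j <= t)%N -> #|S| = (n - j)%N -> J (e (bk lam j) S).
Proof.
move=> /andP [j_gt0 le_jt] cS; have /andP [bk_gt0 bk_le] := bk_bounds le_jt.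
have [lt_S_bk|le_bk_S] := ltnP #|S| (bk lam j).
  by rewrite esym_eq0 //; apply: ideal_gen0.
apply: ideal_gen_mem; split; first by right; left; exists j, S; rewrite j_gt0.
case/removedP => C [eC _ cC].
have [eSC _] := esym_inj (introT andP (conj bk_gt0 le_bk_S)) eC.
by move: cC; rewrite -eSC cS; lia.
Qed.

Lemma prodX_meet_in_J T : #|T| = (n - s)%N -> ~~ [disjoint T & V] ->
  J (\prod_(i in T) 'X_i).
Proof.
move=> cT meetTV; rewrite -esym_cardE cT; apply: ideal_gen_mem; split.
  by right; right; exists T.
case/removedP => C [eC disCV cC].
have hT : (0 < n - s <= #|T|)%N by rewrite cT leqnn andbT; lia.
by have [eTC _] := esym_inj hT eC; move: meetTV; rewrite eTC disCV.
Qed.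

Lemma esym_ge_bk_in_J j r S : (1 <= j <= t)%N -> (bk lam j <= r)%N ->
  #|S| = (n - j)%N -> J (e r S).
Proof.
move=> hj le_bk_r; have /andP [bk_gt0 _] := bk_bounds (proj2 (andP hj)).
rewrite -(subnKC le_bk_r); elim: (r - bk lam j)%N S => [|d IH] S cS.
  by rewrite addn0; apply: esym_bk_in_J.
rewrite addnS -[(bk lam j + d)%N]prednK ?addn_gt0 ?bk_gt0 //.
apply: (ideal_gen_esym_levelS k0 (m := (n - j)%N)) => //; first lia.
by move=> S' cS'; rewrite prednK ?addn_gt0 ?bk_gt0 //; apply: IH.
Qed.

Lemma prodX_in_J T : #|T| = (n - s)%N -> J (\prod_(i in T) 'X_i).
Proof.
move=> cT; have [disTV|] := boolP [disjoint T & V]; last exact: prodX_meet_in_J.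
have cTV : #|T :|: V| = (n - t)%N.
  by rewrite cardsU (disjoint_setI0 disTV) cards0 cT card_set_ltn; lia.
have ht : (1 <= t <= t)%N by rewrite t_gt0 leqnn.
have := esym_ge_bk_in_J ht (proj2 (andP (bk_bounds (leqnn t)))) cTV.
rewrite /Defs.esym (bigD1 T) /=; last by rewrite subsetUl cT eqxx.
apply: ideal_genDKr; apply: ideal_gen_sum => T' /andP [/andP [sT' /eqP cT'] neT'].
apply: prodX_meet_in_J => //; apply: contra neT' => disT'V.
rewrite eqEcard cT cT' leqnn andbT; apply/subsetP => i iT'.
by move: (subsetP sT' i iT'); rewrite in_setU (disjointFr disT'V iT') orbF.
Qed.

Lemma esym_ge_in_J r S : (n - s <= r)%N -> J (e r S).
Proof.
move=> le_r; rewrite -(subnKC le_r); elim: (r - (n - s))%N S => [|d IH] S.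
  by rewrite addn0 /Defs.esym; apply: ideal_gen_sum => T /andP [_ /eqP /prodX_in_J].
by rewrite addnS; apply: ideal_gen_esymS.
Qed.

Lemma DP_gen_in_J q : DP_gen k n lam q -> J q.
Proof.
case=> m [r [S [/andP [m_gt0 le_mn] le_rm cond cS ->]]].
rewrite conj_psum_ltE // in cond.
have [le_r|lt_r] := leqP (n - s) r; first exact: esym_ge_in_J.
have [m_n|j_gt0] := posnP (n - m).
  have -> : S = [set: 'I_n] by apply/eqP; rewrite eqEcard subsetT cardsT card_ord cS; lia.
  rewrite m_n /conj_psum big_geq // in cond.
  have [le_r_l|lt_l_r] := leqP r (size lam).-1; first by apply: esym_setT_in_J; lia.
  apply: (ideal_gen_esym_cardS k0 (m := n.-1)); [lia| |by rewrite cardsT card_ord; lia].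
  move=> S' cS'; apply: (esym_ge_bk_in_J (j := 1)) => //; last lia.
  by rewrite /bk -/(conj_psum lam 1) (conj_psum_size lam_part); lia.
have [le_jt|lt_tj] := leqP (n - m) t.
  apply: (esym_ge_bk_in_J (j := n - m)); [lia| |lia].
  by rewrite /bk -/(conj_psum lam (n - m)); lia.
(* For j = n - m > t, c_j = minn (s + 1) j + (n - s - 1): the condition forces r >= n - s
   or r > m. *)
by move: cond; rewrite (conj_psum_tail lam_part); lia.
Qed.

Lemma Gset_in_DP_ideal q : Gset k n lam q -> DP_ideal k n lam q.
Proof.
have DP_gen_esym m r S : (1 <= m <= n)%N -> (r <= m)%N ->
    (conj_psum lam (n - m) < r + (n - m))%N -> #|S| = m -> DP_ideal k n lam (e r S).
  move=> hm le_rm cond cS; apply: ideal_gen_mem; exists m, r, S.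
  by split=> //; rewrite conj_psum_ltE ?(proj2 (andP hm)).
case=> [[j [hj ->]]|[[j [S [hj cS ->]]]|[S [cS ->]]]].
- apply: (DP_gen_esym n); rewrite ?cardsT ?card_ord ?subnn /conj_psum ?big_geq //; lia.
- have [lt_S_bk|le_bk_S] := ltnP #|S| (bk lam j).
    by rewrite esym_eq0 //; apply: ideal_gen0.
  have := conj_psum_bounds lam_part j; rewrite /bk -/(conj_psum lam j) in le_bk_S *.
  by move=> bounds; apply: (DP_gen_esym (n - j)%N); rewrite ?subKn //; lia.
- by apply: (DP_gen_esym (n - s)%N); rewrite ?subKn ?(conj_psum_tail lam_part) //; lia.
Qed.

End Theorem7.

Theorem mainTheorem7 (k : fieldType) (n : nat) (lam : seq nat) :
  [pchar k] =i pred0 ->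
  is_partition lam n ->
  (1 <= (part lam 2).-1)%N ->
  ((part lam 2).-1 < (part lam 1).-1)%N ->
  forall p : {mpoly k[n]},
    ideal_gen k n (fun q => Gset k n lam q /\ ~ removed k n lam q) p <-> DP_ideal k n lam p.
Proof.
move=> k0 lam_part t_gt0 t_lt_s p; split; apply: ideal_gen_sub => q.
  by case=> /(Gset_in_DP_ideal lam_part t_gt0 t_lt_s).
exact: DP_gen_in_J.
Qed.
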